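(* Let $K\subset\mathbb{R}^n$ be a closed convex set. For every $\varepsilon\ge0$, the map $\nu\mapsto w_\nu(\varepsilon)$ is concave on $K$.
   Context: $w_\nu(\varepsilon)=\mathbb{E}\sup_{t\in B(\nu,\varepsilon)\cap K}\langle x,t\rangle$ with $x\sim N(0,\mathbb{I}_n)$ and $B(\nu,\varepsilon)$ the closed Euclidean ball of radius $\varepsilon$ around $\nu$. *)

From HB Require Import structures.
From mathcomp Require Import all_boot all_order all_algebra.
From mathcomp Require Import all_classical all_reals all_analysis.
Set Implicit Arguments. Unset Strict Implicit. Unset Printing Implicit Defensive.
Import Order.TTheory GRing.Theory Num.Theory.
Import numFieldNormedType.Exports.
Local Open Scope classical_set_scope.
Local Open Scope ring_scope.

Definition inner {R : realType} {n : nat} (x t : 'rV[R]_n) : R :=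
  \sum_(i < n) x 0 i * t 0 i.

Definition enorm {R : realType} {n : nat} (x : 'rV[R]_n) : R :=
  Num.sqrt (\sum_(i < n) x 0 i ^+ 2).

Definition eball {R : realType} {n : nat} (nu : 'rV[R]_n) (eps : R) : set 'rV[R]_n :=
  [set t | enorm (t - nu) <= eps].

Definition vcons {R : realType} {m : nat} (x : R) (v : 'rV[R]_m) : 'rV[R]_m.+1 :=
  \row_(i < m.+1) (if unlift ord0 i is Some j then v 0 j else x).

(* Expectation E[f(x)] for x ~ N(0, I_n), as the iterated integral of f
   against n independent standard normal coordinates (product measure). *)
Fixpoint gauss_exp (R : realType) (n : nat) : ('rV[R]_n -> \bar R) -> \bar R :=
  match n return ('rV[R]_n -> \bar R) -> \bar R with
  | 0 => fun f => f 0
  | m.+1 => fun f =>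
      (\int[@normal_prob R 0 1]_(x in [set: R])
          @gauss_exp R m (fun v : 'rV[R]_m => f (vcons x v)))%E
  end.

Definition gauss_width {R : realType} {n : nat} (K : set 'rV[R]_n)
  (nu : 'rV[R]_n) (eps : R) : \bar R :=
  @gauss_exp R n (fun x : 'rV[R]_n => ereal_sup [set (inner x t)%:E | t in eball nu eps `&` K]).

From HB Require Import structures.
From mathcomp Require Import all_boot all_order all_algebra.
From mathcomp Require Import all_classical all_reals all_analysis.
From mathcomp Require Import ring lra measurable_realfun.
Set Implicit Arguments. Unset Strict Implicit. Unset Printing Implicit Defensive.
Import Order.TTheory GRing.Theory Num.Theory.
Import numFieldNormedType.Exports.
Local Open Scope classical_set_scope.
Local Open Scope ring_scope.

(* If t1 and t2 nearly attain sup { <x, t> | t in B(nu1, eps) ∩ K } and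
   sup { <x, t> | t in B(nu2, eps) ∩ K }, then l t1 + (1 - l) t2 lies in
   B(l nu1 + (1 - l) nu2, eps) ∩ K since the ball and K are convex; so for each x
   the support function of B(nu, eps) ∩ K at x is concave in nu.  Taking Gaussian
   expectations preserves this inequality once the expectation is known to be
   finite, linear and monotone on the functions involved.  These support functions
   are Lipschitz in x because B(nu, eps) ∩ K is bounded, and on Lipschitz functions
   the three properties follow by induction on the dimension, integrating out one
   coordinate at a time: the partial expectation is again Lipschitz, and Lipschitz
   functions are N(0, 1)-integrable because |x| is. *)

Section standard_normal.
Context {R : realType}.
Local Notation P := (@normal_prob R 0 1).

(* (|x| + 1) <= 2 (1 + x^2/4) <= 2 exp (x^2/4) *)
Lemma absD1_expR_le (x : R) : (`|x| + 1) * expR (- (x ^+ 2 / 4)) <= 2.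
Proof.
rewrite expRN ler_pdivrMr ?expR_gt0 //.
apply: le_trans (ler_wpM2l _ (expR_ge1Dx _)) => //.
rewrite -(real_normK (num_real x)); have := normr_ge0 x; nra.
Qed.

Lemma normal_pdf_absD1_le : exists C : R, forall x,
  (`|x| + 1) * normal_pdf 0 1 x <= C * normal_pdf 0 (Num.sqrt 2) x.
Proof.
have s2 : Num.sqrt (2 : R) != 0 by rewrite sqrtr_eq0 -ltNge.
have p1 : 0 < normal_peak (1 : R) by rewrite normal_peak_gt0 ?oner_eq0.
have p2 : 0 < normal_peak (Num.sqrt (2 : R)) by rewrite normal_peak_gt0.
exists (2 * normal_peak 1 / normal_peak (Num.sqrt 2)) => x.
rewrite /normal_pdf oner_eq0 (negbTE s2) /normal_fun !subr0 expr1n sqr_sqrtr //.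
have -> : - x ^+ 2 / (1 *+ 2) = - (x ^+ 2 / 4) + - (x ^+ 2 / 4) by field.
have -> : - x ^+ 2 / (2 *+ 2) = - (x ^+ 2 / 4) by field.
rewrite expRD; set e := expR _.
have -> : 2 * normal_peak 1 / normal_peak (Num.sqrt 2) * (normal_peak (Num.sqrt 2) * e)
  = normal_peak 1 * e * 2 by field; rewrite gt_eqF.
have -> : (`|x| + 1) * (normal_peak 1 * (e * e)) = normal_peak 1 * e * ((`|x| + 1) * e).
  by ring.
by rewrite ler_pM2l ?mulr_gt0 ?expR_gt0 // absD1_expR_le.
Qed.

Let abs_ge (k : nat) : set R := [set x | k%:R <= `|x|].

Let measurable_abs_ge k : measurable (abs_ge k).
Proof.
rewrite [abs_ge k](_ : _ = setT `&` (@Num.norm _ R) @^-1` `[k%:R, +oo[%classic).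
  by apply: normr_measurable => //; exact: measurable_itv.
by apply/seteqP; split => x /=; rewrite in_itv /= andbT // => -[].
Qed.

Lemma sum_indic_abs_ge_le (y : R) N :
  \sum_(0 <= k < N) \1_(abs_ge k) y <= Num.min N%:R (`|y| + 1).
Proof.
elim: N => [|N]; first by rewrite big_geq // le_min ler_wpDl.
rewrite big_nat_recr //= indicE le_min -natr1 => /andP[leN ley].
case: (boolP (y \in abs_ge N)) => [/set_mem /= yN | _]; rewrite le_min.
  by rewrite !lerD // (le_trans leN).
by rewrite !addr0 ley andbT ler_wpDr.
Qed.

Lemma abs_le_sum_indic_abs_ge (y : R) :
  (`|y|%:E <= \sum_(k <oo) (\1_(abs_ge k) y : R)%:E)%E.
Proof.
have [ty yt] := andP (truncn_itv (normr_ge0 y)).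
apply: le_trans (nneseries_lim_ge (Num.truncn `|y|).+1 _) => [|k _ _]; last first.
  by rewrite lee_fin indicE ler0n.
rewrite sumEFin lee_fin (eq_big_nat _ _ (F2 := fun=> 1)) => [|k /andP[_ kt]].
  by rewrite sumr_const_nat subn0 ltW.
by rewrite indicE mem_set //; apply: le_trans ty; rewrite ler_nat -ltnS.
Qed.

Lemma normal_prob_abs_ge k : P (abs_ge k) =
  (\int[lebesgue_measure]_x (\1_(abs_ge k) x * normal_pdf 0 1 x)%:E)%E.
Proof.
rewrite /normal_prob integral_mkcond; apply: eq_integral => x _.
by rewrite patchE indicE; case: (x \in _); rewrite /= ?mul1r ?mul0r.
Qed.

Lemma sum_normal_prob_abs_ge_bounded :
  exists C : R, forall N, (\sum_(0 <= k < N) P (abs_ge k) <= C%:E)%E.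
Proof.
have [C absD1_le] := normal_pdf_absD1_le; exists C => N.
have mApdf k :
    measurable_fun [set: R] (fun x => (\1_(abs_ge k) x * normal_pdf 0 1 x)%:E).
  apply/measurable_EFinP/measurable_funM; first exact: measurable_indic.
  exact: measurable_normal_pdf.
under eq_bigr do rewrite normal_prob_abs_ge.
rewrite -ge0_integral_sum // => [|k x _]; last first.
  by rewrite lee_fin mulr_ge0 ?normal_pdf_ge0 // indicE.
apply: (@le_trans _ _ (\int[lebesgue_measure]_x (C * normal_pdf 0 (Num.sqrt 2) x)%:E)%E).
  apply: ge0_le_integral => //.
  - move=> x _; rewrite sumEFin lee_fin sumr_ge0 // => k _.
    by rewrite mulr_ge0 ?normal_pdf_ge0 // indicE.
  - exact: emeasurable_sum.
  - by apply/measurable_EFinP/measurable_funM => //; exact: measurable_normal_pdf.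
  - move=> x _; rewrite sumEFin lee_fin -mulr_suml.
    apply: le_trans (absD1_le x); rewrite ler_wpM2r ?normal_pdf_ge0 //.
    by have := sum_indic_abs_ge_le x N; rewrite le_min => /andP[].
under eq_integral do rewrite EFinM.
by rewrite integralZl ?integrable_normal_pdf // integral_normal_pdf mule1.
Qed.

Lemma normal_abs_integral_lty : (\int[P]_x `|x|%:E < +oo)%E.
Proof.
(* |x| <= \sum_k 1_{|x| >= k} turns the integral into a series of probabilities
   P(|x| >= k), which, unlike integrals against P, are by definition integrals
   against the density. *)
have [C sumC] := sum_normal_prob_abs_ge_bounded.
have mA k : measurable_fun [set: R] (fun x => (\1_(abs_ge k) x : R)%:E).
  exact/measurable_EFinP/measurable_indic.
have indic_ge0 k x : (0 <= (\1_(abs_ge k) x : R)%:E)%E by rewrite lee_fin indicE.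
apply: (@le_lt_trans _ _ (\int[P]_x \sum_(k <oo) (\1_(abs_ge k) x : R)%:E)%E).
  apply: ge0_le_integral => //.
  - by apply/measurable_EFinP; exact: normr_measurable.
  - exact: (ge0_emeasurable_sum (fun k x _ _ => indic_ge0 k x) (fun k _ => mA k)).
  - by move=> x _; exact: abs_le_sum_indic_abs_ge.
rewrite integral_nneseries //.
rewrite (eq_eseriesr (fun k _ => integral_indic P measurableT (measurable_abs_ge k))).
under eq_eseriesr do rewrite setIT.
apply: (@le_lt_trans _ _ C%:E) (ltry _).
apply: lime_le; last exact: nearW.
by apply: is_cvg_nneseries => k _ _; exact: measure_ge0.
Qed.

Lemma normal_integral_cst (c : R) : (\int[P]_x c%:E = c%:E)%E.
Proof. by rewrite integral_cst //= [X in (_ * X)%E]integral_normal_pdf mule1. Qed.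

Lemma lipschitz_continuous (g : R -> R) L :
  (forall x y, `|g x - g y| <= L * `|x - y|) -> continuous g.
Proof.
move=> gL x; apply/cvgrPdist_lt => e e0.
have L1 : 0 < `|L| + 1 by rewrite ltr_wpDl.
exists (e / (`|L| + 1)) => /= [|z]; first by rewrite divr_gt0.
rewrite /ball_ /= ltr_pdivlMr // => xz; apply: le_lt_trans (gL x z) _.
have := ler_norm L; have := normr_ge0 (x - z); nra.
Qed.

Lemma normal_integrable_lipschitz (g : R -> R) L :
  (forall x y, `|g x - g y| <= L * `|x - y|) -> P.-integrable setT (EFin \o g).
Proof.
move=> gL; have mg := continuous_measurable_fun (lipschitz_continuous gL).
apply/integrableP; split; first exact/measurable_EFinP.
have g_le x : `|g x| <= `|g 0| + `|L| * `|x|.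
  rewrite -[g x](subrK (g 0)) (le_trans (ler_normD _ _)) // addrC lerD2l.
  by rewrite (le_trans (gL x 0)) // subr0 ler_wpM2r // ler_norm.
apply: (@le_lt_trans _ _ (\int[P]_x (`|g 0| + `|L| * `|x|)%:E)%E).
  apply: ge0_le_integral => //.
  - by apply/measurable_EFinP; exact: measurableT_comp.
  - by apply/measurable_EFinP/measurable_funD => //; exact: measurable_funM.
  - by move=> x _; rewrite lee_fin.
under eq_integral do rewrite EFinD EFinM.
rewrite ge0_integralD //; last by apply/measurable_EFinP; exact: measurable_funM.
rewrite normal_integral_cst ge0_integralZl_EFin //.
  by rewrite lte_add_pinfty ?ltry // lte_mul_pinfty // normal_abs_integral_lty.
by apply/measurable_EFinP; exact: normr_measurable.
Qed.

End standard_normal.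

Section gauss_exp_lipschitz.
Context {R : realType}.
Local Notation P := (@normal_prob R 0 1).
Local Notation gexp f := (gauss_exp (fun v => (f v)%:E)).

Definition dist1 n (x y : 'rV[R]_n) : R := \sum_(i < n) `|x 0 i - y 0 i|.

(* The l1 distance splits exactly along [vcons], which drives the induction on n. *)
Definition lipschitz1 n (f : 'rV[R]_n -> R) :=
  exists L, forall x y, `|f x - f y| <= L * dist1 x y.

Lemma dist1xx n (v : 'rV[R]_n) : dist1 v v = 0.
Proof. by rewrite /dist1 big1 // => i _; rewrite subrr normr0. Qed.

Lemma dist1_vcons n a b (v w : 'rV[R]_n) :
  dist1 (vcons a v) (vcons b w) = `|a - b| + dist1 v w.
Proof.
rewrite /dist1 big_ord_recl /vcons !mxE unlift_none; congr (_ + _).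
by apply: eq_bigr => i _; rewrite !mxE liftK.
Qed.

Lemma lipschitz1_vcons n (f : 'rV[R]_n.+1 -> R) x :
  lipschitz1 f -> lipschitz1 (fun v => f (vcons x v)).
Proof.
move=> [L fL]; exists L => v w.
by have := fL (vcons x v) (vcons x w); rewrite dist1_vcons subrr normr0 add0r.
Qed.

Lemma lipschitz1_cst n (c : R) : lipschitz1 (fun _ : 'rV[R]_n => c).
Proof. by exists 0 => x y; rewrite subrr normr0 mul0r. Qed.

Lemma lipschitz1_comb n (f g : 'rV[R]_n -> R) a b :
  lipschitz1 f -> lipschitz1 g -> lipschitz1 (fun v => a * f v + b * g v).
Proof.
move=> [L1 fL] [L2 gL]; exists (`|a| * L1 + `|b| * L2) => x y.
rewrite opprD addrACA -!mulrBr mulrDl -!mulrA.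
apply: le_trans (ler_normD _ _) _; rewrite !normrM.
by apply: lerD; apply: ler_wpM2l.
Qed.

Lemma gauss_exp_cst n (c : R) : @gauss_exp R n (fun _ => c%:E) = c%:E.
Proof. by elim: n => //= n ->; exact: normal_integral_cst. Qed.

Definition gauss_exp_positive_linear n :=
  [/\ forall f : 'rV[R]_n -> R, lipschitz1 f -> gexp f \is a fin_num,
      forall (f g : 'rV[R]_n -> R) a b, lipschitz1 f -> lipschitz1 g ->
        gexp (fun v => a * f v + b * g v) = (a%:E * gexp f + b%:E * gexp g)%E &
      forall f g : 'rV[R]_n -> R, lipschitz1 f -> lipschitz1 g ->
        (forall v, f v <= g v) -> (gexp f <= gexp g)%E].

Section gauss_exp_step.
Variable n : nat.
Hypothesis IH : gauss_exp_positive_linear n.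

Let partial_exp (f : 'rV[R]_n.+1 -> R) (x : R) : R :=
  fine (gexp (fun v => f (vcons x v))).

Let gauss_exp_vcons f x : lipschitz1 f ->
  gexp (fun v => f (vcons x v)) = (partial_exp f x)%:E.
Proof. by case: IH => fin _ _ fL; rewrite fineK // fin //; exact: lipschitz1_vcons. Qed.

Let gauss_expS f : lipschitz1 f -> gexp f = (\int[P]_x (partial_exp f x)%:E)%E.
Proof. by move=> fL; apply: eq_integral => x _; exact: gauss_exp_vcons. Qed.

Let partial_exp_lipschitz f : lipschitz1 f ->
  exists L, forall x y, `|partial_exp f x - partial_exp f y| <= L * `|x - y|.
Proof.
case: IH => _ lin mono fL; have [L fLL] := fL; exists L.
suff le_partial_exp x y : partial_exp f x <= partial_exp f y + L * `|x - y|.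
  move=> x y; have := le_partial_exp x y; have := le_partial_exp y x; rewrite distrC.
  by rewrite ler_norml => ? ?; apply/andP; split; lra.
have fyL := lipschitz1_vcons y fL; have oneL := lipschitz1_cst n 1.
rewrite -lee_fin EFinD -!gauss_exp_vcons // -[_%:E]mule1 -(gauss_exp_cst n 1).
rewrite -[gauss_exp (fun v => (f (vcons y v))%:E)]mul1e -lin //.
apply: mono => [||v]; [exact: lipschitz1_vcons | exact: lipschitz1_comb |].
have := fLL (vcons x v) (vcons y v); rewrite dist1_vcons dist1xx addr0.
by move=> /(le_trans (ler_norm _)); rewrite mul1r mulr1 lerBlDl addrC.
Qed.

Let partial_exp_integrable f :
  lipschitz1 f -> P.-integrable setT (EFin \o partial_exp f).
Proof.
by case/partial_exp_lipschitz => L; exact: normal_integrable_lipschitz.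
Qed.

Lemma gauss_exp_positive_linearS : gauss_exp_positive_linear n.+1.
Proof.
case: IH => _ lin mono; split.
- move=> f fL; rewrite gauss_expS //.
  exact/integrable_fin_num/partial_exp_integrable.
- move=> f g a b fL gL; have fgL := lipschitz1_comb a b fL gL.
  rewrite !gauss_expS // -!integralZl ?partial_exp_integrable //.
  rewrite -integralD //; try exact/integrableZl/partial_exp_integrable.
  apply: eq_integral => x _; rewrite -gauss_exp_vcons // lin ?gauss_exp_vcons //.
  + exact: lipschitz1_vcons.
  + exact: lipschitz1_vcons.
- move=> f g fL gL fg; rewrite !gauss_expS //.
  apply: le_integral => //; try exact: partial_exp_integrable.
  move=> x _ /=; rewrite -!gauss_exp_vcons // mono //; exact: lipschitz1_vcons.
Qed.

End gauss_exp_step.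

Lemma gauss_exp_is_positive_linear n : gauss_exp_positive_linear n.
Proof.
elim: n => [|n]; last exact: gauss_exp_positive_linearS.
by split => //= f g _ _ fg; rewrite lee_fin.
Qed.

End gauss_exp_lipschitz.

Section euclidean_ball.
Context {R : realType} {n : nat}.
Implicit Types (v x t : 'rV[R]_n) (e : R).

Lemma enorm_le v e : 0 <= e -> (enorm v <= e) = (\sum_(i < n) v 0 i ^+ 2 <= e ^+ 2).
Proof.
by move=> e0; rewrite /enorm -{1}(ger0_norm e0) -sqrtr_sqr ler_sqrt ?sqr_ge0.
Qed.

Lemma coord_le_enorm v i : `|v 0 i| <= enorm v.
Proof.
rewrite /enorm -sqrtr_sqr ler_sqrt; last by apply: sumr_ge0 => j _; exact: sqr_ge0.
by rewrite (bigD1 i) //= ler_wpDr // sumr_ge0 // => j _; exact: sqr_ge0.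
Qed.

Lemma enorm_comb_le v1 v2 l e : 0 <= l <= 1 -> 0 <= e ->
  enorm v1 <= e -> enorm v2 <= e -> enorm (l *: v1 + (1 - l) *: v2) <= e.
Proof.
move=> /andP[l0 l1] e0; rewrite !enorm_le // => v1e v2e.
apply: (@le_trans _ _ (\sum_(i < n) (l * v1 0 i ^+ 2 + (1 - l) * v2 0 i ^+ 2))).
  apply: ler_sum => i _; rewrite !mxE.
  (* (l a + (1 - l) b)^2 = l a^2 + (1 - l) b^2 - l (1 - l) (a - b)^2 *)
  have : 0 <= l * (1 - l) * (v1 0 i - v2 0 i) ^+ 2.
    by rewrite mulr_ge0 ?sqr_ge0 // mulr_ge0 // subr_ge0.
  nra.
rewrite big_split /= -!mulr_sumr.
have l1' : 0 <= 1 - l by rewrite subr_ge0.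
have := ler_wpM2l l0 v1e; have := ler_wpM2l l1' v2e; lra.
Qed.

Lemma eball_comb nu1 nu2 t1 t2 l e : 0 <= l <= 1 -> 0 <= e ->
  eball nu1 e t1 -> eball nu2 e t2 ->
  eball (l *: nu1 + (1 - l) *: nu2) e (l *: t1 + (1 - l) *: t2).
Proof.
move=> l01 e0 t1e t2e; rewrite /eball /=.
have -> : l *: t1 + (1 - l) *: t2 - (l *: nu1 + (1 - l) *: nu2) =
    l *: (t1 - nu1) + (1 - l) *: (t2 - nu2).
  by apply/rowP => i; rewrite !mxE; ring.
exact: enorm_comb_le.
Qed.

Lemma eball_coord_le nu e t i : eball nu e t -> `|t 0 i| <= enorm nu + e.
Proof.
move=> tnu; rewrite addrC -[t 0 i](subrK (nu 0 i)).
apply: le_trans (ler_normD _ _) (lerD _ (coord_le_enorm _ _)).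
by apply: le_trans tnu; have := coord_le_enorm (t - nu) i; rewrite !mxE.
Qed.

End euclidean_ball.

Section support_function.
Context {R : realType} {n : nat}.
Implicit Types (S : set 'rV[R]_n) (x y t : 'rV[R]_n).

Definition support S x : R := sup [set inner x t | t in S].

Lemma inner_comb x t1 t2 a b :
  inner x (a *: t1 + b *: t2) = a * inner x t1 + b * inner x t2.
Proof.
by rewrite /inner !mulr_sumr -big_split; apply: eq_bigr => i _; rewrite !mxE /=; ring.
Qed.

Lemma inner_le_dist1 x y t M : (forall i, `|t 0 i| <= M) ->
  inner x t <= inner y t + M * dist1 x y.
Proof.
move=> tM; rewrite -lerBlDl /inner -sumrB mulr_sumr; apply: ler_sum => i _.
rewrite -mulrBl (le_trans (ler_norm _)) // normrM mulrC.
exact: ler_wpM2r.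
Qed.

Section bounded_support.
Variables (S : set 'rV[R]_n) (M : R).
Hypotheses (S0 : S !=set0) (SM : forall t, S t -> forall i, `|t 0 i| <= M).

Lemma has_sup_inner x : has_sup [set inner x t | t in S].
Proof.
split; first by have [t St] := S0; exists (inner x t), t.
exists (M * dist1 x 0) => _ [t St <-].
have inner0 : inner 0 t = 0 by rewrite /inner big1 // => i _; rewrite mxE mul0r.
by have := inner_le_dist1 x 0 (SM St); rewrite inner0 add0r.
Qed.

Lemma support_ub x t : S t -> inner x t <= support S x.
Proof. by move=> St; apply: (ub_le_sup (has_sup_inner x).2); exists t. Qed.

Lemma ereal_sup_inner x :
  ereal_sup [set (inner x t)%:E | t in S] = (support S x)%:E.
Proof.
by have [ne ub] := has_sup_inner x; rewrite -ereal_sup_EFin // image_comp.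
Qed.

Lemma lipschitz1_support : lipschitz1 (support S).
Proof.
suff supp_le x y : support S x <= support S y + M * dist1 x y.
  exists M => x y; have := supp_le x y; have := supp_le y x.
  rewrite /dist1 (eq_bigr _ (fun i _ => distrC (y 0 i) (x 0 i))) ler_norml.
  by move=> ? ?; apply/andP; split; lra.
apply: ge_sup (has_sup_inner x).1 _ => _ [t St <-].
by apply: le_trans (inner_le_dist1 x y (SM St)) _; rewrite lerD2r support_ub.
Qed.

End bounded_support.

Lemma support_comb S1 S2 S x l : 0 <= l <= 1 ->
  has_sup [set inner x t | t in S1] -> has_sup [set inner x t | t in S2] ->
  has_sup [set inner x t | t in S] ->
  (forall t1 t2, S1 t1 -> S2 t2 -> S (l *: t1 + (1 - l) *: t2)) ->
  l * support S1 x + (1 - l) * support S2 x <= support S x.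
Proof.
move=> /andP[l0 l1] S1x S2x Sx S12; apply/ler_addgt0Pr => e e0.
have [_ [t1 S1t1 <-] t1e] := sup_adherent e0 S1x.
have [_ [t2 S2t2 <-] t2e] := sup_adherent e0 S2x.
have : inner x (l *: t1 + (1 - l) *: t2) <= support S x.
  by apply: (ub_le_sup Sx.2); exists (l *: t1 + (1 - l) *: t2); first exact: S12.
rewrite inner_comb /support.
have l1' : 0 <= 1 - l by rewrite subr_ge0.
have := ler_wpM2l l0 (ltW t1e); have := ler_wpM2l l1' (ltW t2e); lra.
Qed.

End support_function.

Lemma convex_set_comb (R : numDomainType) (E : lmodType R) (K : set E) x y l :
  convex_set K -> K x -> K y -> 0 <= l <= 1 -> K (l *: x + (1 - l) *: y).
Proof.
move=> convK Kx Ky /andP[l0 l1].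
by have /set_mem := convK x y (Itv01 l0 l1) (mem_set Kx) (mem_set Ky).
Qed.

Section ball_slice.
Context {R : realType} {n : nat}.
Variables (K : set 'rV[R]_n) (eps : R).
Hypothesis eps0 : 0 <= eps.

Let slice_neq0 nu : K nu -> eball nu eps `&` K !=set0.
Proof.
move=> Knu; exists nu; split => //.
by rewrite /eball /= subrr /enorm big1 ?sqrtr0 // => i _; rewrite mxE expr2 mul0r.
Qed.

Let slice_coord_le nu t :
  (eball nu eps `&` K) t -> forall i, `|t 0 i| <= enorm nu + eps.
Proof. by move=> [tnu _] i; exact: eball_coord_le. Qed.

Lemma has_sup_inner_slice nu x :
  K nu -> has_sup [set inner x t | t in eball nu eps `&` K].
Proof.
by move=> Knu; apply: (has_sup_inner (slice_neq0 Knu) (@slice_coord_le nu)).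
Qed.

Lemma lipschitz1_support_slice nu : K nu -> lipschitz1 (support (eball nu eps `&` K)).
Proof.
by move=> Knu; apply: (lipschitz1_support (slice_neq0 Knu) (@slice_coord_le nu)).
Qed.

Lemma gauss_width_support nu : K nu ->
  gauss_width K nu eps = gauss_exp (fun x => (support (eball nu eps `&` K) x)%:E).
Proof.
move=> Knu; congr gauss_exp; apply/funext => x.
exact: (ereal_sup_inner (slice_neq0 Knu) (@slice_coord_le nu)).
Qed.

Lemma support_slice_concave nu1 nu2 l x :
  convex_set K -> K nu1 -> K nu2 -> 0 <= l <= 1 ->
  l * support (eball nu1 eps `&` K) x + (1 - l) * support (eball nu2 eps `&` K) x
  <= support (eball (l *: nu1 + (1 - l) *: nu2) eps `&` K) x.
Proof.
move=> convK K1 K2 l01; have Kl := convex_set_comb convK K1 K2 l01.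
apply: (support_comb l01); try exact: has_sup_inner_slice.
move=> t1 t2 [t1nu Kt1] [t2nu Kt2].
by split; [exact: eball_comb | exact: convex_set_comb].
Qed.

End ball_slice.

Theorem mainTheorem11 (R : realType) (n : nat) (K : set 'rV[R]_n) :
  closed K -> convex_set K ->
  forall eps : R, 0 <= eps ->
  forall nu1 nu2 : 'rV[R]_n, K nu1 -> K nu2 ->
  forall l : R, 0 <= l <= 1 ->
  (l%:E * gauss_width K nu1 eps + (1 - l)%:E * gauss_width K nu2 eps
     <= gauss_width K (l *: nu1 + (1 - l) *: nu2) eps)%E.
Proof.
move=> _ convK eps eps0 nu1 nu2 K1 K2 l l01.
have Kl := convex_set_comb convK K1 K2 l01.
have [_ gauss_exp_comb le_gauss_exp] := @gauss_exp_is_positive_linear R n.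
rewrite !gauss_width_support // -gauss_exp_comb; try exact: lipschitz1_support_slice.
apply: le_gauss_exp => [||x]; last exact: support_slice_concave.
  by apply: lipschitz1_comb; exact: lipschitz1_support_slice.
exact: lipschitz1_support_slice.
Qed.
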